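(* For every LTL formula $\varphi$ in PNF, $\mathrm{simp}(\varphi)\subseteq\mathrm{SET}(\partial^+(\varphi))$.
   Context: LTL formulae in positive normal form: $\varphi,\psi ::= p \mid \neg p \mid \mathbf{tt} \mid \mathbf{ff} \mid \varphi\wedge\psi \mid \varphi\vee\psi \mid \bigcirc\varphi \mid \varphi\,\mathcal{U}\,\psi \mid \varphi\,\mathcal{R}\,\psi$ (also derived $\Diamond\varphi=\mathbf{tt}\,\mathcal{U}\,\varphi$, $\Box\varphi=\mathbf{ff}\,\mathcal{R}\,\varphi$). A temporal formula is one not starting with $\wedge$ or $\vee$. $\varphi\,\dot\wedge\,\psi$ denotes formal conjunction, normalized modulo associativity, commutativity and idempotence w.r.t. a fixed total order on formulae. $\mathrm{simp}(\varphi\wedge\psi)=\{\varphi'\,\dot\wedge\,\psi'\mid\varphi'\in\mathrm{simp}(\varphi),\psi'\in\mathrm{simp}(\psi)\}$, $\mathrm{simp}(\varphi\vee\psi)=\mathrm{simp}(\varphi)\cup\mathrm{simp}(\psi)$, $\mathrm{simp}(\varphi)=\{\varphi\}$ for temporal $\varphi$. Iterated partial derivatives: $\partial^+(\ell)=\{\ell\}$ for literals $\ell$, $\partial^+(\mathbf{tt})=\{\mathbf{tt}\}$, $\partial^+(\mathbf{ff})=\{\mathbf{ff}\}$, $\partial^+(\varphi\vee\psi)=\partial^+(\varphi\wedge\psi)=\partial^+(\varphi)\cup\partial^+(\psi)$, $\partial^+(\bigcirc\varphi)=\{\bigcirc\varphi\}\cup\partial^+(\varphi)$, $\partial^+(\Diamond\varphi)=\{\Diamond\varphi\}\cup\partial^+(\varphi)$,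 $\partial^+(\Box\varphi)=\{\Box\varphi\}\cup\partial^+(\varphi)$, $\partial^+(\varphi\,\mathcal{U}\,\psi)=\{\varphi\,\mathcal{U}\,\psi\}\cup\partial^+(\psi)\cup\partial^+(\varphi)$, $\partial^+(\varphi\,\mathcal{R}\,\psi)=\{\varphi\,\mathcal{R}\,\psi\}\cup\partial^+(\psi)\cup\partial^+(\varphi)$. For an ordered set $X=\{x_1,x_2,\dots\}$, $\mathrm{SET}(X)=\{\mathbf{tt}\}\cup\{x_{i_1}\,\dot\wedge\,\cdots\,\dot\wedge\,x_{i_n}\mid n\ge1, i_1<\dots<i_n\}$, the set of all formal conjunctions of elements of $X$. *)

From HB Require Import structures.
From mathcomp Require Import all_boot.
Set Implicit Arguments. Unset Strict Implicit. Unset Printing Implicit Defensive.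

Inductive ltl : Type :=
  | Lpos of nat
  | Lneg of nat
  | Ltt | Lff
  | Land of ltl & ltl
  | Lor of ltl & ltl
  | Lnext of ltl
  | Luntil of ltl & ltl
  | Lrelease of ltl & ltl.

Lemma ltl_comparable : comparable ltl.
Proof. move=> x y; rewrite /decidable; decide equality; try (case: (eqVneq n n0) => [->|/eqP]; [left|right]; done). Qed.
HB.instance Definition _ := comparableMixin ltl_comparable.

Definition Lev (f : ltl) := Luntil Ltt f.
Definition Lalw (f : ltl) := Lrelease Lff f.

(* A formal conjunction (normalized modulo associativity, commutativity and
   idempotence) is represented by the sequence of its conjuncts, two formal
   conjunctions being identified when they have the same elements (=i). *)
Definition fconj := seq ltl.
Definition fconj_and (c d : fconj) : fconj := c ++ d.

Fixpoint simp (f : ltl) : seq fconj :=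
  match f with
  | Land g h => [seq fconj_and a b | a <- simp g, b <- simp h]
  | Lor g h => simp g ++ simp h
  | _ => [:: [:: f]]
  end.

(* iterated partial derivatives (as an ordered list; union = concatenation).
   The clauses for <> and [] take precedence over those for U and R. *)
Fixpoint dplus (f : ltl) : seq ltl :=
  match f with
  | Lpos _ | Lneg _ | Ltt | Lff => [:: f]
  | Land g h | Lor g h => dplus g ++ dplus h
  | Lnext g => f :: dplus g
  | Luntil Ltt g => f :: dplus g
  | Lrelease Lff g => f :: dplus g
  | Luntil g h | Lrelease g h => f :: (dplus h ++ dplus g)
  end.

(* membership in SET(X): either the formula tt, or a formal conjunction
   x_{i1} .& ... .& x_{in} with n >= 1 and i1 < ... < in (a nonempty
   subsequence of X), up to ACI-normalization (=i). *)
Definition in_SET (X : seq ltl) (c : fconj) : Prop :=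
  c =i [:: Ltt] \/ exists2 d : fconj, (d != [::]) && subseq d X & c =i d.

From mathcomp Require Import all_boot.

(* Every conjunct of an element of simp f is a temporal subformula of f reached
   through conjunctions and disjunctions only, and every such subformula lies in
   dplus f.  As simp never produces the empty conjunction, filtering dplus f by
   membership in the conjunction yields the required nonempty subsequence. *)

Definition temporal (f : ltl) : bool :=
  if f is (Land _ _ | Lor _ _) then false else true.

Lemma temporal_in_dplus (f : ltl) : temporal f -> f \in dplus f.
Proof. by case: f => [||||||| [] | [] ] //= *; rewrite inE eqxx. Qed.

Lemma mem_simp_temporal (f : ltl) (c : fconj) :
  temporal f -> c \in simp f -> c = [:: f].
Proof. by case: f => //= *; apply/eqP; rewrite -mem_seq1. Qed.

Lemma simp_neq_nil (f : ltl) (c : fconj) : c \in simp f -> c != [::].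
Proof.
elim: f c => [n|n|||g IHg h _|g IHg h IHh|g _|g _ h _|g _ h _] c;
  try by move/mem_simp_temporal->.
- by move=> /allpairsP[[a b] [/IHg + _ ->]]; case: a.
- by rewrite mem_cat => /orP[/IHg|/IHh].
Qed.

Lemma simp_sub_dplus (f : ltl) (c : fconj) : c \in simp f -> {subset c <= dplus f}.
Proof.
elim: f c => [n|n|||g IHg h IHh|g IHg h IHh|g _|g _ h _|g _ h _] c;
  try by move=> /mem_simp_temporal-> // x /[1!inE] /eqP->; apply: temporal_in_dplus.
- move=> /allpairsP[[a b] [/IHg ga /IHh hb ->]] x.
  by rewrite mem_cat => /orP[/ga|/hb] x_in; rewrite mem_cat x_in ?orbT.
- by rewrite mem_cat => /orP[/IHg|/IHh] sub x /sub x_in; rewrite mem_cat x_in ?orbT.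
Qed.

Lemma in_SET_subset (X : seq ltl) (c : fconj) :
  c != [::] -> {subset c <= X} -> in_SET X c.
Proof.
move=> c_neq_nil cX; right; exists [seq x <- X | x \in c].
  rewrite filter_subseq andbT -has_filter.
  by case: c c_neq_nil cX => // y c _ cX; apply/hasP; exists y; rewrite ?cX ?mem_head.
by move=> x; rewrite mem_filter andb_idr //; apply: cX.
Qed.

Theorem lemma6 (f : ltl) (c : fconj) : c \in simp f -> in_SET (dplus f) c.
Proof.
move=> c_simp; apply: in_SET_subset.
- exact: simp_neq_nil c_simp.
- exact: simp_sub_dplus c_simp.
Qed.
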